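(* Let $r>0$ and $d_0>0$. There exists $s_0$ such that for all $s\ge s_0$, for every $\Gamma\in\mathcal{H}$ and all non-empty compact sets $K,K'\subseteq\mathbb{R}^2$ with $d_H(K,K')<d_0$: if $K\in\mathcal{LA}_s(\Gamma)$, then $K'\in\mathcal{LA}_r(\Gamma)$.
   Context: $d_H$ is the Hausdorff distance. $\mathcal{H}$ is the set of homothety types: non-empty compact subsets of $\mathbb{R}^2$ modulo the group generated by translations and homotheties of positive ratio. For $r>0$, $\Gamma\in\mathcal{H}$ and non-empty compact $K\subseteq\mathbb{R}^2$, $K$ is an $r$-large approximate of $\Gamma$, written $K\in\mathcal{LA}_r(\Gamma)$, if $\mathrm{diam}(K)>r$ and there is a set $\hat\Gamma\in\Gamma$ of diameter $1$ with $d_H(K/\mathrm{diam}(K),\hat\Gamma)<1/r$. *)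

(* The plane R^2 is modelled as R * R (product
   topology = Euclidean topology), with the Euclidean distance defined below. *)
From HB Require Import structures.
From mathcomp Require Import all_boot all_order all_algebra.
From mathcomp Require Import all_classical all_reals all_analysis.
Set Implicit Arguments. Unset Strict Implicit. Unset Printing Implicit Defensive.
Import Order.TTheory GRing.Theory Num.Theory numFieldNormedType.Exports.
Local Open Scope classical_set_scope.
Local Open Scope ring_scope.

Section Defs.
Variable R : realType.
Notation P2 := (R * R)%type.

Definition eucl (p q : P2) : R :=
  Num.sqrt ((p.1 - q.1) ^+ 2 + (p.2 - q.2) ^+ 2).

Definition diam (K : set P2) : R :=
  sup [set eucl p q | p in K & q in K].

Definition dist_to (p : P2) (B : set P2) : R :=
  inf [set eucl p q | q in B].

Definition hausdorff (A B : set P2) : R :=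
  Num.max (sup [set dist_to a B | a in A]) (sup [set dist_to b A | b in B]).

Definition scale_set (c : R) (K : set P2) : set P2 :=
  [set (c * p.1, c * p.2) | p in K].

(* H is obtained from G by an element of the group generated by translations
   and positive homotheties, i.e. a map x |-> l x + v with l > 0. *)
Definition homothetic (G H : set P2) : Prop :=
  exists (l : R) (v : P2), 0 < l /\
    H = [set (l * p.1 + v.1, l * p.2 + v.2) | p in G].

Definition LA (r : R) (G K : set P2) : Prop :=
  r < diam K /\
  exists Gh : set P2, homothetic G Gh /\ diam Gh = 1 /\
    hausdorff (scale_set (diam K)^-1 K) Gh < r^-1.

End Defs.

From mathcomp Require Import all_boot all_order all_algebra.
From mathcomp Require Import all_classical all_reals all_analysis.
From mathcomp Require Import ring lra.
Import Order.TTheory GRing.Theory Num.Theory numFieldNormedType.Exports.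
Local Open Scope classical_set_scope.
Local Open Scope ring_scope.
Set Implicit Arguments. Unset Strict Implicit.

(* If [d_H(K, K') < d0], the diameters [D] of [K] and [D'] of [K'] differ by at
   most [2 d0]. Rescaling [K'] by [1/D'] instead of [1/D] moves it, up to one
   translation, by at most [|D - D'| / D], and [K'/D] is within [d0 / D] of
   [K/D]. Hence the same translate of the diameter-one representative of the
   homothety type that approximates [K/D] within [1/s] approximates [K'/D']
   within [3 d0 / D + 1/s < 3 d0 / s + 1/s], which is below [1/r] for large [s]. *)

Section EuclideanPlane.
Variable R : realType.
Notation P2 := (R * R)%type.
Implicit Types (p q x y : P2) (A B C : set P2).

Lemma eucl_ge0 p q : 0 <= eucl p q.
Proof. exact: sqrtr_ge0. Qed.

Lemma eucl_scaled_diff x y p q (c : R) :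
  x.1 - y.1 = c * (p.1 - q.1) -> x.2 - y.2 = c * (p.2 - q.2) ->
  eucl x y = `|c| * eucl p q.
Proof.
move=> h1 h2.
by rewrite /eucl h1 h2 !exprMn -mulrDr sqrtrM ?sqr_ge0 // sqrtr_sqr.
Qed.

Lemma eucl_sym p q : eucl p q = eucl q p.
Proof.
by rewrite (@eucl_scaled_diff p q q p (-1)) ?normrN ?normr1 ?mul1r //; ring.
Qed.

Lemma cauchy_schwarz2 (a b c d : R) :
  a * c + b * d <= Num.sqrt (a ^+ 2 + b ^+ 2) * Num.sqrt (c ^+ 2 + d ^+ 2).
Proof.
rewrite -sqrtrM ?addr_ge0 ?sqr_ge0 //; apply: le_trans (ler_norm _) _.
rewrite -sqrtr_sqr ler_sqrt ?mulr_ge0 ?addr_ge0 ?sqr_ge0 //.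
have := sqr_ge0 (a * d - b * c); nra.
Qed.

Lemma eucl_triangle p q x : eucl p x <= eucl p q + eucl q x.
Proof.
rewrite /eucl.
set a := p.1 - q.1; set b := p.2 - q.2; set c := q.1 - x.1; set d := q.2 - x.2.
have -> : p.1 - x.1 = a + c by rewrite /a /c; ring.
have -> : p.2 - x.2 = b + d by rewrite /b /d; ring.
have cs := cauchy_schwarz2 a b c d.
have sum_sqr_ge0 (u v : R) : 0 <= u ^+ 2 + v ^+ 2 by rewrite addr_ge0 ?sqr_ge0.
have := sqr_sqrtr (sum_sqr_ge0 a b); have := sqr_sqrtr (sum_sqr_ge0 c d).
move: cs; set X := Num.sqrt (a ^+ 2 + _); set Y := Num.sqrt (c ^+ 2 + _).
move=> cs YY XX.
rewrite -[leRHS]ger0_norm ?addr_ge0 ?sqrtr_ge0 // -sqrtr_sqr.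
by rewrite ler_sqrt ?sqr_ge0 //; nra.
Qed.

Lemma eucl_le_norm p q : eucl p q <= 2 * `|p - q|.
Proof.
rewrite prod_normE /eucl /=.
set m := Num.max _ _.
have [m1 m2] : `|p.1 - q.1| <= m /\ `|p.2 - q.2| <= m by rewrite !le_max !lexx ?orbT.
have m0 : 0 <= m := le_trans (normr_ge0 _) m1.
rewrite -[leRHS]ger0_norm ?mulr_ge0 // -sqrtr_sqr ler_sqrt ?sqr_ge0 //.
rewrite -!(real_normK (num_real (_ - _))).
have := normr_ge0 (p.1 - q.1); have := normr_ge0 (p.2 - q.2); nra.
Qed.

Definition distances A : set R := [set eucl p q | p in A & q in A].

Definition ebounded A := has_ubound (distances A).

Lemma compact_ebounded A : compact A -> ebounded A.
Proof.
move=> /compact_bounded [M [_ hM]]; exists (2 * ((M + 1) + (M + 1))).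
move=> _ [p Ap [q Aq <-]]; apply: le_trans (eucl_le_norm p q) _.
rewrite ler_pM2l //; apply: le_trans (ler_normB p q) _.
by rewrite lerD // (hM (M + 1)) ?ltrDl.
Qed.

(* [sup] is [0] on sets without a supremum, so a nonzero diameter certifies
   that the set is nonempty and bounded. *)
Lemma diam_neq0 A : diam A != 0 -> A !=set0 /\ ebounded A.
Proof.
apply: contra_neqP => hA; apply: sup_out => -[[_ [p Ap _]] bA].
by apply: hA; split => //; exists p.
Qed.

Lemma eucl_le_diam A p q : ebounded A -> A p -> A q -> eucl p q <= diam A.
Proof. by move=> /ub_le_sup bA Ap Aq; apply: bA; exists p => //; exists q. Qed.

Lemma ge_diam A (z : R) : A !=set0 ->
  (forall p q, A p -> A q -> eucl p q <= z) -> diam A <= z.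
Proof.
move=> [a Aa] hz; apply: ge_sup; first by exists (eucl a a), a => //; exists a.
by move=> _ [p Ap [q Aq <-]]; apply: hz.
Qed.

Definition eucl_lipschitz (k : R) (f : P2 -> P2) :=
  forall p q, eucl (f p) (f q) <= k * eucl p q.

Lemma ebounded_image (k : R) f A :
  0 <= k -> eucl_lipschitz k f -> ebounded A -> ebounded (f @` A).
Proof.
move=> k0 fk [M hM]; exists (k * M) => _ [_ [p Ap <-] [_ [q Aq <-] <-]].
by apply: le_trans (fk p q) _; rewrite ler_wpM2l // hM //; exists p => //; exists q.
Qed.

Lemma diam_isometry f A :
  (forall p q, eucl (f p) (f q) = eucl p q) -> diam (f @` A) = diam A.
Proof.
move=> fE; congr sup; apply/seteqP; split.
  by move=> _ [_ [p Ap <-] [_ [q Aq <-] <-]]; rewrite fE; exists p => //; exists q.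
move=> _ [p Ap [q Aq <-]]; rewrite -fE.
by exists (f p); [exists p | exists (f q) => //; exists q].
Qed.

Definition scale (c : R) p : P2 := (c * p.1, c * p.2).

Definition translate w p : P2 := (p.1 + w.1, p.2 + w.2).

Lemma eucl_scale c p q : eucl (scale c p) (scale c q) = `|c| * eucl p q.
Proof. by apply: eucl_scaled_diff => /=; ring. Qed.

Lemma eucl_translate w p q : eucl (translate w p) (translate w q) = eucl p q.
Proof.
by rewrite (@eucl_scaled_diff _ _ p q 1) ?normr1 ?mul1r //= ; ring.
Qed.

Lemma scale_lipschitz c : eucl_lipschitz `|c| (scale c).
Proof. by move=> p q; rewrite eucl_scale. Qed.

Lemma translate_lipschitz w : eucl_lipschitz 1 (translate w).
Proof. by move=> p q; rewrite eucl_translate mul1r. Qed.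

Lemma homothetic_translate w G H :
  homothetic G H -> homothetic G (translate w @` H).
Proof.
move=> [l [v [l0 ->]]]; exists l, (v.1 + w.1, v.2 + w.2); split => //.
by rewrite image_comp; congr image; apply/funext => p /=; rewrite !addrA.
Qed.

Lemma dist_to_le p B b : B b -> dist_to p B <= eucl p b.
Proof.
by move=> Bb; apply: ge_inf; [exists 0 => _ [q _ <-]; apply: eucl_ge0 | exists b].
Qed.

Lemma dist_to_lt p B (e : R) : B !=set0 -> dist_to p B < e ->
  exists2 b, B b & eucl p b < e.
Proof.
move=> [b0 Bb0] /inf_lt [|_ [b Bb <-] pb]; last by exists b.
by exists (eucl p b0), b0.
Qed.

Definition close_to A B (e : R) := forall a, A a -> exists2 b, B b & eucl a b <= e.

Definition hclose A B (e : R) := close_to A B e /\ close_to B A e.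

Lemma hclose_sym A B (e : R) : hclose A B e -> hclose B A e.
Proof. by case. Qed.

Lemma hclose_trans A B C (e1 e2 : R) :
  hclose A B e1 -> hclose B C e2 -> hclose A C (e1 + e2).
Proof.
have side X Y Z e e' : close_to X Y e -> close_to Y Z e' -> close_to X Z (e + e').
  move=> XY YZ x Xx; have [y Yy xy] := XY x Xx; have [z Zz yz] := YZ y Yy.
  by exists z => //; apply: le_trans (eucl_triangle x y z) _; rewrite lerD.
move=> [AB BA] [BC CB]; split; [exact: side AB BC | rewrite addrC; exact: side CB BA].
Qed.

Lemma hclose_image (k : R) f A B (e : R) : 0 <= k -> eucl_lipschitz k f ->
  hclose A B e -> hclose (f @` A) (f @` B) (k * e).
Proof.
move=> k0 fk.
have side X Y : close_to X Y e -> close_to (f @` X) (f @` Y) (k * e).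
  move=> XY _ [x Xx <-]; have [y Yy xy] := XY x Xx.
  by exists (f y); [exists y | apply: le_trans (fk x y) _; rewrite ler_wpM2l].
by move=> [AB BA]; split; apply: side.
Qed.

Lemma hclose_pointwise f g A (e : R) :
  (forall a, A a -> eucl (f a) (g a) <= e) -> hclose (f @` A) (g @` A) e.
Proof.
move=> fg; split => _ [a Aa <-]; first by exists (g a); [exists a | apply: fg].
by exists (f a); [exists a | rewrite eucl_sym; apply: fg].
Qed.

Lemma hausdorff_lt_hclose A B (e : R) : A !=set0 -> B !=set0 ->
  ebounded A -> ebounded B -> hausdorff A B < e -> hclose A B e.
Proof.
have side X Y : X !=set0 -> Y !=set0 -> ebounded X ->
    sup [set dist_to x Y | x in X] < e -> close_to X Y e.
  move=> [x0 Xx0] [y0 Yy0] [M hM] hXY x Xx.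
  have ub : has_ubound [set dist_to x Y | x in X].
    exists (M + eucl x0 y0) => _ [z Xz <-]; apply: le_trans (dist_to_le _ Yy0) _.
    apply: le_trans (eucl_triangle z x0 y0) _.
    by rewrite lerD2r hM //; exists z => //; exists x0.
  have Y0 : Y !=set0 by exists y0.
  have /(dist_to_lt Y0)[y Yy xy] : dist_to x Y < e.
    by apply: le_lt_trans hXY; apply: ub_le_sup ub _ _; exists x.
  by exists y => //; apply: ltW.
move=> A0 B0 bA bB; rewrite /hausdorff gt_max => /andP[hAB hBA].
by split; apply: side.
Qed.

Lemma hausdorff_le_hclose A B (e : R) : A !=set0 -> B !=set0 ->
  hclose A B e -> hausdorff A B <= e.
Proof.
have side X Y : X !=set0 -> close_to X Y e -> sup [set dist_to x Y | x in X] <= e.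
  move=> [x0 Xx0] XY; apply: ge_sup; first by exists (dist_to x0 Y), x0.
  by move=> _ [x Xx <-]; have [y Yy xy] := XY x Xx; apply: le_trans (dist_to_le _ Yy) xy.
by move=> A0 B0 [AB BA]; rewrite /hausdorff ge_max !side.
Qed.

Lemma diam_le_close_to A B (e : R) : A !=set0 -> ebounded B ->
  close_to A B e -> diam A <= diam B + 2 * e.
Proof.
move=> A0 bB AB; apply: ge_diam => // p q Ap Aq.
have [p' Bp' pp'] := AB p Ap; have [q' Bq' qq'] := AB q Aq.
have := eucl_le_diam bB Bp' Bq'; have := eucl_triangle p p' q.
have := eucl_triangle p' q' q; rewrite (eucl_sym q' q); lra.
Qed.

Lemma dist_diam_le_hclose A B (e : R) : A !=set0 -> B !=set0 ->
  ebounded A -> ebounded B -> hclose A B e -> `|diam A - diam B| <= 2 * e.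
Proof.
move=> A0 B0 bA bB [AB BA]; rewrite ler_distl.
have := diam_le_close_to A0 bB AB; have := diam_le_close_to B0 bA BA.
by move=> hB hA; apply/andP; split; lra.
Qed.

Lemma hclose_renormalize K a (D D' d : R) :
  0 < D -> 0 < D' -> `|D - D'| <= d -> (forall p, K p -> eucl p a <= D') ->
  hclose (scale D'^-1 @` K)
         (translate (scale (D'^-1 - D^-1) a) @` (scale D^-1 @` K)) (d / D).
Proof.
move=> D0 D'0 dD Ka; rewrite image_comp; apply: hclose_pointwise => p Kp /=.
have -> : eucl (scale D'^-1 p) (translate (scale (D'^-1 - D^-1) a) (scale D^-1 p))
    = `|D'^-1 - D^-1| * eucl p a by apply: eucl_scaled_diff => /=; ring.
apply: le_trans (ler_wpM2l (normr_ge0 _) (Ka p Kp)) _.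
have -> : `|D'^-1 - D^-1| * D' = `|D - D'| / D.
  have -> : `|D'^-1 - D^-1| * D' = `|(D'^-1 - D^-1) * D'|.
    by rewrite normrM (gtr0_norm D'0).
  have -> : (D'^-1 - D^-1) * D' = (D - D') / D by field; rewrite !gt_eqF.
  by rewrite normrM [`|D^-1|]gtr0_norm ?invr_gt0.
by rewrite ler_wpM2r // invr_ge0 ltW.
Qed.

Lemma hclose_renormalized K K' Gh a (d t : R) :
  let D := diam K in let D' := diam K' in
  0 < D -> 0 < D' -> `|D - D'| <= 2 * d -> ebounded K' -> K' a ->
  hclose K' K d -> hclose (scale D^-1 @` K) Gh t ->
  hclose (scale D'^-1 @` K') (translate (scale (D'^-1 - D^-1) a) @` Gh)
         (3 * d / D + t).
Proof.
move=> D D' D0 D'0 dD bK' K'a hK'K hKG.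
set w := scale (D'^-1 - D^-1) a.
have h1 := hclose_renormalize D0 D'0 dD (fun p K'p => eucl_le_diam bK' K'p K'a).
have h2 := hclose_image ler01 (translate_lipschitz w)
  (hclose_image (normr_ge0 _) (scale_lipschitz D^-1) hK'K).
have h3 := hclose_image ler01 (translate_lipschitz w) hKG.
have := hclose_trans (hclose_trans h1 h2) h3.
by rewrite !mul1r gtr0_norm ?invr_gt0 // -addrA; congr hclose => //; field; rewrite gt_eqF.
Qed.

End EuclideanPlane.

Lemma renormalization_error_lt (R : realType) (r d s D : R) :
  0 < r -> 0 < d -> r * (3 * d + 1) <= s -> s < D -> 3 * d / D + s^-1 < r^-1.
Proof.
move=> r0 d0 hs sD.
have s0 : 0 < s by apply: lt_le_trans hs; rewrite mulr_gt0 //; lra.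
have lt_s : 3 * d / D < 3 * d / s by rewrite ltr_pM2l ?ltf_pV2 ?posrE //; lra.
suff : 3 * d / s + s^-1 <= r^-1 by lra.
have -> : 3 * d / s + s^-1 = (3 * d + 1) / s by field; rewrite gt_eqF.
by rewrite ler_pdivrMr // -(ler_pM2l r0) mulrA mulfV ?gt_eqF // mul1r.
Qed.

Theorem mainTheorem5 (R : realType) (r d0 : R) :
  0 < r -> 0 < d0 ->
  exists s0 : R, forall s : R, s0 <= s ->
    forall G K K' : set (R * R)%type,
      compact G -> G !=set0 ->
      compact K -> K !=set0 ->
      compact K' -> K' !=set0 ->
      hausdorff K K' < d0 ->
      LA s G K -> LA r G K'.
Proof.
(* [r + 2 d0 <= s0] forces [diam K' > r]; [r (3 d0 + 1) <= s0] controls the error. *)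
move=> r0 d00; exists (r * (3 * d0 + 1) + r + 2 * d0).
move=> s hs G K K' _ _ cK K0 cK' K'0 hKK' [sD [Gh [GGh [dGh hKG]]]].
have s0 : 0 < s by nra.
have [bK bK'] := (compact_ebounded cK, compact_ebounded cK').
have [Gh0 bGh] : Gh !=set0 /\ ebounded Gh by apply: diam_neq0; rewrite dGh oner_neq0.
have cKK' := hausdorff_lt_hclose K0 K'0 bK bK' hKK'.
have dKK' := dist_diam_le_hclose K0 K'0 bK bK' cKK'.
have D'r : r < diam K' by move: dKK'; rewrite ler_distl => /andP[_ ?]; nra.
have cKG : hclose (scale (diam K)^-1 @` K) Gh s^-1.
  apply: hausdorff_lt_hclose => //; first exact: image_nonempty.
  exact: ebounded_image (normr_ge0 _) (scale_lipschitz _) bK.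
have [a K'a] := K'0.
split => //; exists (translate (scale ((diam K')^-1 - (diam K)^-1) a) @` Gh).
split; first exact: homothetic_translate.
split; first by rewrite diam_isometry // => p q; apply: eucl_translate.
have := hclose_renormalized (lt_trans s0 sD) (lt_trans r0 D'r) dKK' bK' K'a
  (hclose_sym cKK') cKG.
move=> /(hausdorff_le_hclose (image_nonempty _ K'0) (image_nonempty _ Gh0)).
by move/le_lt_trans; apply; apply: renormalization_error_lt => //; lra.
Qed.
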